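(* Let $p\ge 1$, $n,m\ge 1$, and let $\tilde X_1,\dots,\tilde X_n\in\mathbb R^p$, $\tilde Y_1,\dots,\tilde Y_n\in\mathbb R$ and $(X_1,Y_1),\dots,(X_m,Y_m)\in\mathbb R^p\times\mathbb R$ be given data. Let $f(t)=c_\alpha\exp(-d^{-\alpha}|t|^\alpha)$, $t\in\mathbb R$, for some $\alpha\ge 1$, $d>0$ and $c_\alpha=\frac{\alpha}{2d\Gamma(1/\alpha)}$. Define, for $\beta\in\mathbb R^p$, $$\ell_{n,m}(\beta)=\frac{1}{n+m}\sum_{j=1}^n\log\Big(\frac1n\sum_{i=1}^n f(\tilde Y_j-\beta^\top\tilde X_i)\Big)+\frac{1}{n+m}\sum_{k=1}^m\log f(Y_k-\beta^\top X_k).$$ If the matrix $M\in\mathbb R^{m\times p}$ whose $k$-th row is $X_k^\top$ has $\operatorname{rank}(M)=p$, then $\ell_{n,m}$ admits at least one maximizer over $\mathbb R^p$.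
   Context: This is the ''semi-supervised learning empirical log-likelihood'' for the linear model $Y=\beta_0^\top X+\epsilon$ with noise density $f$, combining an unmatched sample ($\tilde X_i$, $\tilde Y_j$) and a matched sample $(X_k,Y_k)$. *)

From HB Require Import structures.
From mathcomp Require Import all_boot all_order all_algebra.
From mathcomp Require Import all_classical all_reals all_analysis.
Set Implicit Arguments. Unset Strict Implicit. Unset Printing Implicit Defensive.
Import Order.TTheory GRing.Theory Num.Theory.
Local Open Scope classical_set_scope.
Local Open Scope ring_scope.

Definition Gamma {R : realType} (s : R) : R :=
  fine (\int[@lebesgue_measure R]_(t in `]0%R, +oo[%classic)
          ((t `^ (s - 1)) * expR (- t))%:E)%E.

Definition c_alpha {R : realType} (alpha d : R) : R :=
  alpha / (2 * d * Gamma (alpha^-1)).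

Definition gg_density {R : realType} (alpha d : R) (t : R) : R :=
  c_alpha alpha d * expR (- ((d `^ (- alpha)) * (`|t| `^ alpha))).

Definition dotp {R : realType} (p : nat) (b x : 'cV[R]_p) : R :=
  \sum_(i < p) b i 0 * x i 0.

Definition ssl_loglik {R : realType} (alpha d : R) (p n m : nat)
  (Xt : 'I_n -> 'cV[R]_p) (Yt : 'I_n -> R)
  (X : 'I_m -> 'cV[R]_p) (Y : 'I_m -> R) (b : 'cV[R]_p) : R :=
  (n + m)%:R^-1 * \sum_(j < n)
     ln (n%:R^-1 * \sum_(i < n) gg_density alpha d (Yt j - dotp b (Xt i)))
  + (n + m)%:R^-1 * \sum_(k < m) ln (gg_density alpha d (Y k - dotp b (X k))).

Definition design_mx {R : realType} (p m : nat) (X : 'I_m -> 'cV[R]_p)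
  : 'M[R]_(m, p) := \matrix_(k < m, i < p) X k i 0.

(* Only the matched sample drives coercivity.  Each mean of densities in the
   unmatched term is at most c_alpha, and
   ln f(t) = ln c_alpha - d^-alpha |t|^alpha, so
   l(beta) <= ln c_alpha - const * sum_k |Y_k - beta^T X_k|^alpha.  As
   |t|^alpha >= |t| - 1, the vector M beta stays l^1-bounded on every superlevel
   set of l, and a left inverse of the full column rank matrix M then bounds
   beta itself.  Hence a superlevel set lies in a compact box, where the
   continuous function l attains its maximum. *)

From HB Require Import structures.
From mathcomp Require Import all_boot all_order all_algebra.
From mathcomp Require Import all_classical all_reals all_analysis.
From mathcomp Require Import lra.
Import Order.TTheory GRing.Theory Num.Theory.
Import numFieldNormedType.Exports.
Local Open Scope classical_set_scope.
Local Open Scope ring_scope.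

Section RealFacts.
Context {R : realType}.

Lemma continuous_powR_norm (a : R) :
  1 <= a -> continuous (fun t : R => `|t| `^ a).
Proof.
move=> a_ge1 t; have [->|t0] := eqVneq t 0; last first.
  have powR_cont : {for `|t|, continuous (fun x : R => x `^ a)}.
    apply/differentiable_continuous/derivable1_diffP/derivable_powR.
    by rewrite in_itv /= andbT normr_gt0.
  exact: (continuous_comp (@norm_continuous _ R^o t) powR_cont).
have a_neq0 : a != 0 by rewrite gt_eqF // (lt_le_trans ltr01).
apply/cvgrPdist_lt => e e_gt0 /=; rewrite normr0 powR0 //.
have : \forall x \near (0 : R), `|x| < Num.min e 1.
  by apply: (@cvgr0_norm_lt R R^o _ _ _ id cvg_id); rewrite lt_min e_gt0 ltr01.
apply: filterS => x; rewrite lt_min => /andP[xe x1].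
rewrite sub0r normrN ger0_norm ?powR_ge0 //.
have [->|x0] := eqVneq x 0; first by rewrite normr0 powR0.
by apply: le_lt_trans xe; apply: ge1r_powR => //; rewrite normr_gt0 x0 ltW.
Qed.

Lemma normr_sub1_le_powR (a t : R) : 1 <= a -> `|t| - 1 <= `|t| `^ a.
Proof.
move=> a_ge1; have [t_ge1|t_lt1] := lerP 1 `|t|.
  by apply: le_trans (le1r_powR _ _) => //; rewrite gerBl.
by apply: le_trans (powR_ge0 _ _); rewrite subr_le0 ltW.
Qed.

Lemma mean_gt0 (n : nat) (F : 'I_n -> R) : (0 < n)%N ->
  (forall i, 0 < F i) -> 0 < n%:R^-1 * \sum_i F i.
Proof.
move=> n_gt0 F_gt0; rewrite mulr_gt0 ?invr_gt0 ?ltr0n //.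
rewrite (bigD1 (Ordinal n_gt0)) //= ltr_pwDl ?F_gt0 //.
by apply: sumr_ge0 => i _; exact/ltW.
Qed.

Lemma mean_le (n : nat) (F : 'I_n -> R) (c : R) : (0 < n)%N ->
  (forall i, F i <= c) -> n%:R^-1 * \sum_i F i <= c.
Proof.
move=> n_gt0 F_le; rewrite ler_pdivrMl ?ltr0n // mulr_natl.
by rewrite -[in X in _ <= X](card_ord n) -sumr_const; exact: ler_sum.
Qed.

Lemma continuous_ln_comp (T : topologicalType) (g : T -> R) :
  continuous g -> (forall x, 0 < g x) -> continuous (fun x => ln (g x)).
Proof.
move=> g_cont g_gt0 x.
exact: continuous_comp (g_cont x) (continuous_ln (g_gt0 x)).
Qed.

Lemma superlevel_compact_max {T : topologicalType} {f : T -> R} {A : set T}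
    {x0 : T} :
  compact A -> continuous f -> (forall x, f x0 <= f x -> A x) ->
  exists x, forall y, f y <= f x.
Proof.
move=> A_compact f_cont superlevel_A.
have A_x0 : A x0 by exact: superlevel_A.
have [x _ x_max] := compact_EVT_max (ex_intro _ x0 A_x0) A_compact
  (continuous_subspaceT f_cont).
exists x => y; have [fy_ge|fy_lt] := lerP (f x0) (f y).
  by apply: x_max; rewrite inE; exact: superlevel_A.
by apply: le_trans (ltW fy_lt) (x_max _ _); rewrite inE.
Qed.

Lemma row_full_coord_le {m p : nat} (A : 'M[R]_(m, p)) : row_full A ->
  exists2 C : 'I_p -> R, (forall i, 0 <= C i) &
    forall (b : 'cV[R]_p) i, `|b i 0| <= C i * \sum_k `|(A *m b) k 0|.
Proof.
case/row_fullP => N NA1; exists (fun i => \sum_k `|N i k|) => [i|b i].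
  by apply: sumr_ge0.
have -> : b i 0 = \sum_k N i k * (A *m b) k 0.
  by rewrite -[in LHS](mul1mx b) -NA1 -mulmxA mxE.
rewrite mulr_suml; apply: le_trans (ler_norm_sum _ _ _) _.
apply: ler_sum => k _; rewrite normrM ler_wpM2l //.
by rewrite (bigD1 k) //= lerDl sumr_ge0.
Qed.

End RealFacts.

Section GeneralizedGaussian.
Variables (R : realType) (alpha d : R).
Local Notation c := (c_alpha alpha d).
Local Notation f := (gg_density alpha d).

Lemma gg_density_gt0 t : 0 < c -> 0 < f t.
Proof. by move=> c_gt0; rewrite mulr_gt0 // expR_gt0. Qed.

Lemma gg_density_le t : 0 <= c -> f t <= c.
Proof.
move=> c_ge0; rewrite ler_piMr // expR_le1 oppr_le0.
by rewrite mulr_ge0 // powR_ge0.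
Qed.

Lemma gg_density_le0 t : c <= 0 -> f t <= 0.
Proof. by move=> c_le0; rewrite mulr_le0_ge0 // expR_ge0. Qed.

Lemma ln_gg_density t : 0 < c ->
  ln (f t) = ln c - d `^ (- alpha) * `|t| `^ alpha.
Proof. by move=> c_gt0; rewrite lnM ?posrE ?expR_gt0 // expRK. Qed.

Lemma continuous_gg_density : 1 <= alpha -> continuous f.
Proof.
move=> alpha_ge1 t; apply: cvgM; first exact: cvg_cst.
apply: continuous_comp; last exact: continuous_expR.
by apply: cvgN; apply: cvgM; [exact: cvg_cst | exact: continuous_powR_norm].
Qed.

End GeneralizedGaussian.

Section SemiSupervisedLogLikelihood.
Context {R : realType} {alpha d : R} {p n m : nat}.
Variables (Xt : 'I_n -> 'cV[R]_p) (Yt : 'I_n -> R).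
Variables (X : 'I_m -> 'cV[R]_p) (Y : 'I_m -> R).
Local Notation c := (c_alpha alpha d).
Local Notation f := (gg_density alpha d).
Local Notation L := (ssl_loglik alpha d Xt Yt X Y).

Lemma design_mx_mulE (b : 'cV[R]_p) k : (design_mx X *m b) k 0 = dotp b (X k).
Proof. by rewrite mxE; apply: eq_bigr => i _; rewrite mxE mulrC. Qed.

Lemma ssl_loglik_eq0 b : c <= 0 -> L b = 0.
Proof.
move=> c_le0; rewrite /ssl_loglik big1 => [|j _]; last first.
  rewrite ln0 // mulr_ge0_le0 ?invr_ge0 //.
  by apply: sumr_le0 => i _; exact: gg_density_le0.
by rewrite mulr0 add0r big1 ?mulr0 // => k _; rewrite ln0 // gg_density_le0.
Qed.

Lemma ssl_loglik_le b : (0 < n)%N -> 0 < c ->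
  L b <= ln c - (n + m)%:R^-1 *
    (d `^ (- alpha) * \sum_k `|Y k - dotp b (X k)| `^ alpha).
Proof.
move=> n_gt0 c_gt0; set N := (n + m)%:R^-1; set S := \sum_k _.
have unmatched_le :
    \sum_j ln (n%:R^-1 * \sum_i f (Yt j - dotp b (Xt i))) <= ln c *+ n.
  rewrite -[in X in _ <= X](card_ord n) -sumr_const; apply: ler_sum => j _.
  rewrite ler_ln ?posrE ?mean_gt0 // => [|i]; last exact: gg_density_gt0.
  by apply: mean_le => // i; apply/gg_density_le/ltW.
have matched_eq : \sum_k ln (f (Y k - dotp b (X k))) =
    ln c *+ m - d `^ (- alpha) * S.
  under eq_bigr do rewrite ln_gg_density //.
  by rewrite sumrB sumr_const card_ord -mulr_sumr.
rewrite /ssl_loglik matched_eq -/N.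
apply: le_trans (lerD (ler_wpM2l _ unmatched_le) (lexx _)) _.
  by rewrite invr_ge0.
rewrite -mulrDr addrA -mulrnDr mulrBr -mulr_natl mulrA mulVf ?mul1r //.
by rewrite pnatr_eq0 -lt0n addn_gt0 n_gt0.
Qed.

Lemma ssl_loglik_superlevel_bounded (l : R) :
  (0 < n)%N -> 1 <= alpha -> 0 < d -> 0 < c -> \rank (design_mx X) = p ->
  exists r : 'I_p -> R, forall b, l <= L b -> forall i, `|b i 0| <= r i.
Proof.
move=> n_gt0 alpha_ge1 d_gt0 c_gt0 rankX.
have [C C_ge0 coord_le] := row_full_coord_le (design_mx X) (introT eqP rankX).
pose N : R := (n + m)%:R^-1; pose D := d `^ (- alpha).
have ND_gt0 : 0 < N * D.
  by rewrite mulr_gt0 ?powR_gt0 // invr_gt0 ltr0n addn_gt0 n_gt0.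
pose SY := \sum_k `|Y k|.
exists (fun i => C i * ((ln c - l) / (N * D) + SY + m%:R)) => b lb i.
apply: le_trans (coord_le b i) _; apply: ler_wpM2l => //.
under eq_bigr do rewrite design_mx_mulE.
set T := \sum_k _; set S := \sum_k `|Y k - dotp b (X k)| `^ alpha.
have T_le : T - SY - m%:R <= S.
  rewrite -sumrB -[m in m%:R](card_ord m) -sumr_const -sumrB.
  apply: ler_sum => k _; apply: le_trans (normr_sub1_le_powR _ _ alpha_ge1).
  by rewrite lerD2r distrC lerB_dist.
have S_le : S <= (ln c - l) / (N * D).
  rewrite ler_pdivlMr // mulrC -mulrA.
  have := ssl_loglik_le b n_gt0 c_gt0; rewrite -/N -/D -/S.
  move: (N * (D * S)) => NDS; lra.
lra.
Qed.

Lemma continuous_ssl_loglik_trmx : (0 < n)%N -> 1 <= alpha -> 0 < c ->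
  continuous (fun v : 'rV[R]_p => L v^T).
Proof.
move=> n_gt0 alpha_ge1 c_gt0.
have dotp_cont x : continuous (fun v : 'rV[R]_p => dotp v^T x).
  have -> : (fun v : 'rV[R]_p => dotp v^T x) = (fun v => \sum_i v 0 i * x i 0).
    by apply/funext => v; apply: eq_bigr => i _; rewrite mxE.
  apply: continuous_big => [|i _ v]; first exact: add_continuous.
  by apply: continuousM; [exact: coord_continuous | exact: cst_continuous].
have f_cont y x : continuous (fun v : 'rV[R]_p => f (y - dotp v^T x)).
  move=> v; apply: (continuous_comp (f := fun v : 'rV[R]_p => y - dotp v^T x)).
    by apply: continuousB; [exact: cst_continuous | exact: dotp_cont].
  exact: continuous_gg_density.
have unmatched_cont : continuous (fun v : 'rV[R]_p =>
    \sum_j ln (n%:R^-1 * \sum_i f (Yt j - dotp v^T (Xt i)))).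
  apply: continuous_big => [|j _]; first exact: add_continuous.
  apply: continuous_ln_comp => [w|w]; last first.
    by rewrite mean_gt0 // => i; exact: gg_density_gt0.
  apply: (continuousM (s := fun=> n%:R^-1)); first exact: cst_continuous.
  by apply: continuous_big => [|i _]; [exact: add_continuous | exact: f_cont].
have matched_cont : continuous (fun v : 'rV[R]_p =>
    \sum_k ln (f (Y k - dotp v^T (X k)))).
  apply: continuous_big => [|k _]; first exact: add_continuous.
  by apply: continuous_ln_comp => // w; exact: gg_density_gt0.
move=> v; exact: cvgD (cvgM (cvg_cst _) (unmatched_cont v))
  (cvgM (cvg_cst _) (matched_cont v)).
Qed.

End SemiSupervisedLogLikelihood.

Theorem lemma1 (R : realType) (p n m : nat) (alpha d : R)
  (Xt : 'I_n -> 'cV[R]_p) (Yt : 'I_n -> R)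
  (X : 'I_m -> 'cV[R]_p) (Y : 'I_m -> R) :
  (1 <= p)%N -> (1 <= n)%N -> (1 <= m)%N ->
  1 <= alpha -> 0 < d ->
  \rank (design_mx X) = p ->
  exists b : 'cV[R]_p, forall b' : 'cV[R]_p,
    ssl_loglik alpha d Xt Yt X Y b' <= ssl_loglik alpha d Xt Yt X Y b.
Proof.
move=> _ n_gt0 _ alpha_ge1 d_gt0 rankX.
set L := ssl_loglik alpha d Xt Yt X Y.
(* Positivity of c_alpha would need Gamma(1/alpha), a [fine] of an
   extended-real integral, to be finite and positive. *)
have [c_le0|c_gt0] := lerP (c_alpha alpha d) 0.
  by exists 0 => b; rewrite /L !ssl_loglik_eq0.
have [r r_bound] := ssl_loglik_superlevel_bounded Xt Yt X Y (L 0)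
  n_gt0 alpha_ge1 d_gt0 c_gt0 rankX.
(* [rV_compact] covers boxes of row vectors only, hence we maximize v |-> L v^T. *)
pose box := [set v : 'rV[R]_p | forall i, `[- r i, r i]%classic (v ord0 i)].
have box_compact : compact box.
  apply: (@rV_compact _ _ (fun i => `[- r i, r i]%classic)) => i.
  exact: segment_compact.
have L_cont : continuous (fun v : 'rV[R]_p => L v^T).
  exact: continuous_ssl_loglik_trmx.
have superlevel_box (v : 'rV[R]_p) : L 0^T <= L v^T -> box v.
  rewrite trmx0 => /r_bound v_le i.
  by rewrite /= in_itv /= -ler_norml; have := v_le i; rewrite mxE.
have [v v_max] := superlevel_compact_max box_compact L_cont superlevel_box.
by exists v^T => b; have := v_max b^T; rewrite trmxK.
Qed.
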